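(* There is a constant $c>0$ such that for every integer $\kappa\ge 1$ (large enough), every $\frac{\kappa+1}{\kappa}$-APLS for the minimum edge cover problem on graphs of odd-girth at least $2\kappa+1$ has proof size at least $c\log\kappa$; i.e., the proof size is $\Omega(\log\kappa)$.
   Context: All graphs are finite, connected and undirected, $G=(V,E)$, $n=|V|$, $N(v)$ is the set of neighbors of $v$; each node distinguishes its incident edges by port numbers $1,\dots,|N(v)|$. An input assignment $\mathsf{I}:V\to\{0,1\}^*$ and an output assignment $\mathsf{O}:V\to\{0,1\}^*$ give each node a local input and a local output. A configuration graph is a pair $\langle G,S\rangle$ with $S:V\to\{0,1\}^*$; an IO graph $\langle G,\mathsf I,\mathsf O\rangle$ (with $S(v)=\mathsf I(v)\cdot\mathsf O(v)$) is a configuration graph. Given a universe $\mathcal U$ of configuration graphs and disjoint families $\mathcal F_Y,\mathcal F_N\subseteq\mathcal U$, a gap proof labeling scheme (GPLS) consists of a prover which, given a configuration graph in $\mathcal F_Y$, assigns a label $L(v)\in\{0,1\}^*$ to every node, and a verifier which at each node $v$ receives only $\langle S(v),L(v),L^N(v)\rangle$, where $L^N(v)$ is the vector of labels of $v$'s neighbors (indexed by port), and outputs True or False; the verifier accepts if all nodes output True and rejects otherwise. The GPLS is correct if (i) for every configuration graph in $\mathcal F_Y$ the verifier accepts under the prover's labels, and (ii) for every configuration graph in $\mathcal F_N$ the verifier rejects under every label assignment; nothing is required for other configuration graphs. Its proof size is the maximum label length assigned by the prover over configuration graphs in $\mathcal F_Y$. A distributed graph optimization problem $\Psi=\langle\Pi,f\rangle$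 consists of a set $\Pi$ of IO graphs and an integer-valued objective $f$ on $\Pi$; $\langle G,\mathsf I\rangle$ is legal if some $\mathsf O$ has $\langle G,\mathsf I,\mathsf O\rangle\in\Pi$ (a feasible solution); $OPT_\Psi(G,\mathsf I)$ is the infimum (minimization) or supremum (maximization) of $f$ over feasible solutions. For $\alpha\ge 1$, an $\alpha$-APLS for $\Psi$ is a GPLS over $\mathcal U=\{\langle G,\mathsf I,\mathsf O\rangle:\langle G,\mathsf I\rangle\text{ legal}\}$ with $\mathcal F_Y$ the IO graphs in $\Pi$ with $f=OPT_\Psi(G,\mathsf I)$, and $\mathcal F_N$ equal to $\mathcal U$ minus the IO graphs in $\Pi$ with $f\le\alpha\cdot OPT_\Psi(G,\mathsf I)$ (minimization) resp. $f\ge OPT_\Psi(G,\mathsf I)/\alpha$ (maximization). Restricting to a graph family means the universe contains only IO graphs whose underlying graph lies in the family. Minimum edge cover: the output assignment encodes a set $C\subseteq E$; it is feasible iff $C$ is an edge cover (every node is incident on an edge of $C$), and $f=|C|$ is minimized. The odd-girth of a graph is the length of its shortest odd cycle ($\infty$ if there is none). *)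

From Stdlib Require Import Reals.
From mathcomp Require Import ssreflect ssrfun ssrbool eqtype ssrnat seq path
  choice fintype fingraph finset.


Definition bitstring := seq bool.

(* Port-numbered graphs.  Nodes are 'I_n; [pg_adj G v] lists the        *)
(* neighbours of v in port order: the neighbour at port i (1 <= i <=    *)
(* deg v) is [nth _ (pg_adj G v) (i-1)].                                *)
Record pgraph := PGraph {
  pg_n : nat;
  pg_adj : 'I_pg_n -> seq 'I_pg_n
}.

Definition node (G : pgraph) := 'I_(pg_n G).

Definition adjrel (G : pgraph) : rel (node G) := fun x y => y \in pg_adj G x.

Definition wf_graph (G : pgraph) : Prop :=
  [/\ 0 < pg_n G,
      forall v : node G, uniq (pg_adj G v),
      forall v : node G, v \notin pg_adj G v,
      forall u v : node G, adjrel G u v -> adjrel G v u &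
      forall u v : node G, connect (adjrel G) u v].

Definition odd_girth_ge (G : pgraph) (m : nat) : Prop :=
  forall c : seq (node G),
    uniq c -> cycle (adjrel G) c -> 3 <= size c -> odd (size c) -> m <= size c.

Definition assignment (G : pgraph) := node G -> bitstring.

(* The verifier at v receives <S(v), L(v), L^N(v)>, where L^N(v) is the
   vector of neighbour labels indexed by port. It does not see n, the
   identity of v, or anything else. *)
Definition verifier := bitstring -> bitstring -> seq bitstring -> bool.

Definition prover := forall G : pgraph, assignment G -> assignment G.

Definition accepts (V : verifier) (G : pgraph) (S L : assignment G) : Prop :=
  forall v : node G, V (S v) (L v) (map L (pg_adj G v)).

Definition io_config (G : pgraph) (I O : assignment G) : assignment G :=
  fun v => I v ++ O v.

(* O(v) is a bit vector over v's ports: bit i-1 says whether the edge   *)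
(* at port i belongs to C. O encodes an edge set iff every O(v) has     *)
(* length deg(v) and both endpoints of every edge agree.               *)
Definition ec_input (G : pgraph) : assignment G := fun _ => [::].

Definition marks (G : pgraph) (O : assignment G) (v u : node G) : bool :=
  nth false (O v) (index u (pg_adj G v)).

Definition encodes_edge_set (G : pgraph) (O : assignment G) : Prop :=
  (forall v : node G, size (O v) = size (pg_adj G v)) /\
  (forall u v : node G, adjrel G u v -> marks G O u v = marks G O v u).

Definition is_edge_cover (G : pgraph) (O : assignment G) : Prop :=
  forall v : node G, exists u : node G, adjrel G v u /\ marks G O v u.

Definition ec_feasible (G : pgraph) (O : assignment G) : Prop :=
  encodes_edge_set G O /\ is_edge_cover G O.

Definition ec_cost (G : pgraph) (O : assignment G) : nat :=
  #|[set p : node G * node G |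
      [&& (val p.1 < val p.2)%N, adjrel G p.1 p.2 & marks G O p.1 p.2]]|.

Definition ec_legal (G : pgraph) : Prop := exists O : assignment G, ec_feasible G O.

Definition ec_optimal (G : pgraph) (O : assignment G) : Prop :=
  ec_feasible G O /\ forall O' : assignment G, ec_feasible G O' -> ec_cost G O <= ec_cost G O'.

(* O feasible with f(O) <= ((k+1)/k) * OPT(G), i.e. k * f(O) <= (k+1) * OPT *)
Definition ec_approx (k : nat) (G : pgraph) (O : assignment G) : Prop :=
  ec_feasible G O /\
  forall O' : assignment G, ec_feasible G O' -> k * ec_cost G O <= k.+1 * ec_cost G O'.

Definition ec_universe (k : nat) (G : pgraph) : Prop :=
  wf_graph G /\ odd_girth_ge G (2 * k + 1) /\ ec_legal G.

Definition ec_APLS (k : nat) (V : verifier) (P : prover) : Prop :=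
  (forall (G : pgraph) (O : assignment G),
     ec_universe k G -> ec_optimal G O ->
     let S := io_config G (ec_input G) O in accepts V G S (P G S)) /\
  (forall (G : pgraph) (O : assignment G),
     ec_universe k G -> ~ ec_approx k G O ->
     forall L : assignment G, ~ accepts V G (io_config G (ec_input G) O) L).

(* "proof size >= x": the maximum label length assigned by the prover over
   the yes-instances is >= x, i.e. some yes-instance gets a label of
   length >= x. *)
Definition ec_proof_size_ge (k : nat) (P : prover) (x : R) : Prop :=
  exists (G : pgraph) (O : assignment G),
    ec_universe k G /\ ec_optimal G O /\
    exists v : node G,
      Rle x (INR (size (P G (io_config G (ec_input G) O) v))).

From Stdlib Require Import Reals Lra Classical.
From mathcomp Require Import ssreflect ssrfun ssrbool eqtype ssrnat seq path
  choice div fintype fingraph finset bigop.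
From mathcomp Require Import zify.

Set Implicit Arguments.
Unset Strict Implicit.

(* The argument is a pumping argument on cycles.  The odd cycle with 2k+1
   nodes has odd-girth 2k+1, and its optimal edge cover (the alternating one,
   where a single node is covered twice) is a yes-instance.  Assume all labels
   there are shorter than (ln k)/16.  Going around the cycle, the verifier at
   a node only depends on the "state" formed by the output and label of the
   node and of its predecessor, and consecutive states are linked by the
   accepting relation [state_step].  There are fewer than k states, so the
   closed walk of states contains a simple closed walk of length L < k through
   the state of the doubly covered node.  Repeating it t = 2(k+1) times gives
   an accepted configuration on the even cycle with tL nodes (no odd cycle at
   all) in which at least t nodes are covered twice; such a cover costs at
   least (tL + t)/2 whereas the optimum is tL/2, so soundness forces k <= L. *)

Section CycleGraph.
Variable m : nat.
Local Notation N := m.+3.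
Local Notation csucc := (@ordS N).
Local Notation cpred := (@ord_pred N).

Lemma val_ordS (v : 'I_N) : (csucc v : nat) = if v < m.+2 then v.+1 else 0.
Proof.
have := ltn_ord v; rewrite /=; case: (ltnP v m.+2) => [lt_v _ | le_v lt_v].
  by rewrite modn_small.
have -> : v.+1 = N by lia.
by rewrite modnn.
Qed.

Lemma val_ord_pred (v : 'I_N) : (cpred v : nat) = if v == 0 :> nat then m.+2 else v.-1.
Proof.
rewrite /=; case: eqP => [-> | nz_v]; first by rewrite modn_small.
have -> : (v + N).-1 = v.-1 + N by lia.
by rewrite modnDr modn_small //; have := ltn_ord v; lia.
Qed.

Lemma cpred_neq v : cpred v != v.
Proof. by apply/eqP => /(congr1 (@nat_of_ord N)); rewrite val_ord_pred; case: ifP; lia. Qed.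
Lemma csucc_neq v : csucc v != v.
Proof. by apply/eqP => /(congr1 (@nat_of_ord N)); rewrite val_ordS; case: ifP; lia. Qed.
Lemma cpred_neq_succ v : cpred v != csucc v.
Proof.
by apply/eqP => /(congr1 (@nat_of_ord N)); rewrite val_ord_pred val_ordS; have := ltn_ord v;
  do 2 case: ifP; lia.
Qed.

Lemma csucc2_neq v : csucc (csucc v) != v.
Proof.
apply/eqP => /(congr1 (@nat_of_ord N)); rewrite !val_ordS; have := ltn_ord v.
by do 2 case: ifP => /=; rewrite ?val_ordS; try case: ifP; lia.
Qed.

Definition cyc : pgraph := PGraph N (fun v : 'I_N => [:: cpred v; csucc v]).

Lemma adj_cyc (u v : 'I_N) : adjrel cyc u v = (v == cpred u) || (v == csucc u).
Proof. by rewrite /adjrel /= !inE. Qed.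

Lemma adj_cyc_sym (u v : 'I_N) : adjrel cyc u v = adjrel cyc v u.
Proof.
apply/idP/idP; rewrite !adj_cyc => /orP[]/eqP->;
  by rewrite ?ordSK ?ord_predK eqxx ?orbT.
Qed.

Lemma csucc_walk j : j < N ->
  exists q, path (frel csucc) ord0 q /\ last ord0 q = inord j.
Proof.
elim: j => [|j IH] lt_jN.
  by exists [::]; split=> //; apply: val_inj; rewrite /= inordK.
have [q [walk_q last_q]] := IH (ltnW lt_jN).
exists (rcons q (inord j.+1)); rewrite rcons_path last_rcons walk_q last_q; split=> //=.
apply/eqP/ord_inj; rewrite val_ordS !inordK; try lia.
by case: ifP; lia.
Qed.

Lemma wf_cyc : wf_graph cyc.
Proof.
have conn0 (v : 'I_N) : connect (adjrel cyc) ord0 v.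
  have [q [walk_q last_q]] := csucc_walk (ltn_ord v).
  have adj_walk_q : path (adjrel cyc) ord0 q.
    by apply: sub_path walk_q => x y /eqP <-; rewrite adj_cyc eqxx orbT.
  by have := path_connect adj_walk_q (mem_last ord0 q); rewrite last_q inord_val.
split=> //.
- by move=> v; rewrite /= inE cpred_neq_succ.
- by move=> v; rewrite /= !inE !(eq_sym v) (negbTE (cpred_neq v)) (negbTE (csucc_neq v)).
- by move=> u v; rewrite adj_cyc_sym.
- move=> u v; apply: connect_trans (conn0 v).
  by rewrite (sym_connect_sym adj_cyc_sym).
Qed.

(* Winding number: a walk with a forward and b backward steps ends at
   x + a - b modulo N. *)
Lemma cyc_walk_winding (x : 'I_N) (p : seq 'I_N) : path (adjrel cyc) x p ->
  exists a b, a + b = size p /\ last x p = (x + a + b * N.-1) %% N :> nat.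
Proof.
elim: p x => [|y p IH] x /=.
  by move=> _; exists 0, 0; rewrite mul0n !addn0 modn_small.
rewrite adj_cyc => /andP[/orP[]/eqP-> /IH[a [b [size_p ->]]]].
- exists a, b.+1; split; first lia.
  rewrite /= -!addnA modnDml !addnA mulSn; congr (_ %% _); lia.
- exists a.+1, b; split; first lia.
  rewrite /= -!addnA modnDml !addnA; congr (_ %% _); lia.
Qed.

(* A closed walk of odd length winds around the cycle, so it has length at
   least N: the cycle has odd-girth N. *)
Lemma cyc_odd_girth g : g <= N -> odd_girth_ge cyc g.
Proof.
move=> le_gN [|x p] // _ closed _ odd_c; apply: leq_trans le_gN _.
have [a [b [hab hx]]] := cyc_walk_winding closed.
rewrite last_rcons in hx; rewrite size_rcons in hab.
have mod_ab : a = b %[mod N].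
  apply/eqP; rewrite -(eqn_modDl x); apply/eqP.
  rewrite -(modnMDl b (x + a)).
  have -> : b * N + (x + a) = (x + a + b * N.-1) + b.
    by rewrite mulnS; move: (b * m.+2) => y; lia.
  by rewrite -modnDml -hx.
rewrite [size _]/= -hab.
have [lt_ab|lt_ba|eq_ab] := ltngtP a b.
- have : N %| b - a by rewrite -eqn_mod_dvd ?(ltnW lt_ab) // mod_ab.
  by move/dvdn_leq; lia.
- have : N %| a - b by rewrite -eqn_mod_dvd ?(ltnW lt_ba) // mod_ab.
  by move/dvdn_leq; lia.
- by move: odd_c; rewrite [size _]/= -hab eq_ab addnn odd_double.
Qed.

Lemma marks_pred (O : assignment cyc) v : marks cyc O v (cpred v) = nth false (O v) 0.
Proof. by rewrite /marks /= eqxx. Qed.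

Lemma marks_succ (O : assignment cyc) v : marks cyc O v (csucc v) = nth false (O v) 1.
Proof. by rewrite /marks /= eqxx (negbTE (cpred_neq_succ v)). Qed.

Definition port_set (O : assignment cyc) (b : nat) := [set v : 'I_N | nth false (O v) b].

Definition doubled (O : assignment cyc) := port_set O 0 :&: port_set O 1.

(* The edge {v, v+1}, as an ordered pair like those counted by [ec_cost]. *)
Definition cyc_edge (v : 'I_N) := if v < csucc v then (v, csucc v) else (csucc v, v).

Lemma cyc_edge_inj : injective cyc_edge.
Proof.
move=> u v; rewrite /cyc_edge; case: ifP => _; case: ifP => _ [e1 e2] //.
- by move: (csucc2_neq v); rewrite -e1 e2 eqxx.
- by move: (csucc2_neq v); rewrite -e2 e1 eqxx.
Qed.

(* For a consistent marking, each cover edge is the successor edge of exactly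
   one node, so the cost is the number of nodes marking their successor. *)
Lemma cost_succ_marked (O : assignment cyc) :
  (forall u v, adjrel cyc u v -> marks cyc O u v = marks cyc O v u) ->
  ec_cost cyc O = #|port_set O 1|.
Proof.
move=> consistent; rewrite /ec_cost -(card_imset _ cyc_edge_inj).
apply: eq_card => -[a b]; rewrite inE /=.
apply/and3P/imsetP => [[lt_ab adj_ab mark_ab] | [v]].
  move: (adj_ab); rewrite adj_cyc => /orP[]/eqP def_b.
    exists b; first by rewrite inE -marks_succ def_b ord_predK -consistent // -def_b.
    by rewrite /cyc_edge def_b ord_predK -def_b ltnNge ltnW.
  by exists a; rewrite ?inE -?marks_succ -?def_b // /cyc_edge -def_b lt_ab.
rewrite inE -marks_succ /cyc_edge => mark_v; case: ifP => lt_v [-> ->]; split=> //.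
- by rewrite adj_cyc eqxx orbT.
- by rewrite ltn_neqAle leqNgt lt_v andbT; exact: csucc_neq.
- by rewrite adj_cyc ordSK eqxx.
- by rewrite -consistent // adj_cyc eqxx orbT.
Qed.

(* A node marking its predecessor edge is the successor of a node marking its
   successor edge. *)
Lemma pred_marked_le_succ_marked (O : assignment cyc) :
  (forall u v, adjrel cyc u v -> marks cyc O u v = marks cyc O v u) ->
  #|port_set O 0| <= #|port_set O 1|.
Proof.
move=> consistent; rewrite -(card_imset _ (@ord_pred_inj N)); apply: subset_leq_card.
apply/subsetP => w /imsetP [v]; rewrite inE -marks_pred => mark_v ->.
by rewrite inE -marks_succ ord_predK -consistent // adj_cyc eqxx.
Qed.

(* Counting marks: every node has one mark and doubled nodes have two, and
   every cover edge carries two marks, so N + #doubled <= 2 * cost. *)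
Lemma cover_lower_bound (O : assignment cyc) :
  ec_feasible cyc O -> N + #|doubled O| <= 2 * ec_cost cyc O.
Proof.
move=> [[_ consistent] covers].
have all_marked : port_set O 0 :|: port_set O 1 = setT.
  apply/setP => v; rewrite !inE; have [u [adj_vu mark_vu]] := covers v.
  by move: adj_vu mark_vu; rewrite adj_cyc => /orP[]/eqP ->;
    rewrite ?marks_pred ?marks_succ => ->; rewrite ?orbT.
have := cardsU (port_set O 0) (port_set O 1); rewrite all_marked cardsT card_ord.
have := pred_marked_le_succ_marked consistent; rewrite cost_succ_marked //.
rewrite /doubled; lia.
Qed.

Lemma cyc_feasible (O : assignment cyc) :
  (forall v : 'I_N, size (O v) = 2) ->
  (forall v : 'I_N, nth false (O v) 1 = nth false (O (csucc v)) 0) ->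
  (forall v : 'I_N, nth false (O v) 0 || nth false (O v) 1) -> ec_feasible cyc O.
Proof.
move=> size_O agree covers; split; first split.
- by move=> v; rewrite size_O.
- move=> u v; rewrite adj_cyc => /orP[]/eqP->.
    by rewrite marks_pred -(ord_predK u) -agree -marks_succ !ord_predK.
  by rewrite marks_succ agree -marks_pred ordSK.
- move=> v; case/orP: (covers v) => mark_v; [exists (cpred v) | exists (csucc v)];
    by rewrite adj_cyc eqxx ?orbT ?marks_pred ?marks_succ.
Qed.

(* The alternating cover: the edges {v, v+1} with v even, plus the edge
   {N-1, 0} when N is odd (then node 0 is covered twice). *)
Definition alt_cover : assignment cyc :=
  fun v => [:: odd v || (v == 0 :> nat) && odd N; ~~ odd v].

Lemma alt_cover_feasible : ec_feasible cyc alt_cover.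
Proof.
apply: cyc_feasible => [//|v|v]; last by rewrite /alt_cover /=; case: (odd v); rewrite ?orbT.
rewrite /alt_cover val_ordS /=; case: ifP => [_|last_v] /=; first by rewrite orbF.
have -> : nat_of_ord v = m.+2 by have := ltn_ord v; lia.
by rewrite /= negbK.
Qed.

Lemma alt_cover_cost : ec_cost cyc alt_cover <= N.+1./2.
Proof.
rewrite cost_succ_marked; last by case: alt_cover_feasible => -[].
pose half (i : 'I_N.+1./2) : 'I_N := inord i.*2.
apply: (@leq_trans #|half @: setT|); last first.
  by rewrite (leq_trans (leq_imset_card _ _)) // cardsT card_ord.
apply: subset_leq_card; apply/subsetP => v; rewrite inE /= => even_v.
have lt_half : v./2 < N.+1./2 by have := ltn_ord v; lia.
apply/imsetP; exists (Ordinal lt_half) => //; apply: ord_inj.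
by rewrite /= inordK /=; have := ltn_ord v; lia.
Qed.
End CycleGraph.

Arguments alt_cover : clear implicits.

Lemma cycle_universe k m : 2 * k + 1 <= m.+3 -> ec_universe k (cyc m).
Proof.
move=> le_k; split; first exact: wf_cyc.
by split; [exact: cyc_odd_girth | exists (alt_cover m); exact: alt_cover_feasible].
Qed.

(* On an odd cycle every cover costs at least ceil(N/2): the alternating
   cover is optimal. *)
Lemma alt_cover_optimal m : ~~ odd m -> ec_optimal (cyc m) (alt_cover m).
Proof.
move=> even_m; split=> [|O feas_O]; first exact: alt_cover_feasible.
by have := cover_lower_bound feas_O; have := alt_cover_cost m; lia.
Qed.

(* On an even cycle of length tL (optimum tL/2), a cover with t doubled nodes
   costs at least (tL+t)/2; so if it is a (k+1)/k-approximation, k <= L. *)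
Lemma approx_needs_long_period k m t L (O : assignment (cyc m)) :
  odd m -> m.+3 = t * L -> 0 < t -> t <= #|doubled O| -> ec_approx k (cyc m) O -> k <= L.
Proof.
move=> odd_m size_cyc t_gt0 many_doubled [feas_O ratio].
have lb : m.+3 + t <= 2 * ec_cost (cyc m) O.
  by apply: leq_trans (cover_lower_bound feas_O); rewrite leq_add2l.
have ub : 2 * ec_cost (cyc m) (alt_cover m) <= m.+3.
  by have := alt_cover_cost m; lia.
have : k * (m.+3 + t) <= k.+1 * m.+3.
  apply: leq_trans (leq_mul (leqnn k) lb) _.
  rewrite mulnCA (leq_trans (leq_mul (leqnn 2) (ratio _ (alt_cover_feasible m)))) //.
  by rewrite mulnCA leq_mul.
rewrite size_cyc mulnDr mulSn => bound.
have : k * t <= t * L by move: bound; move: (k * (t * L)) => kN; lia.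
by rewrite mulnC leq_pmul2l.
Qed.

Fixpoint strings_upto (n : nat) : seq bitstring :=
  if n is n'.+1 then
    [::] :: map (cons true) (strings_upto n') ++ map (cons false) (strings_upto n')
  else [:: [::]].

Lemma mem_strings_upto n (s : bitstring) : size s <= n -> s \in strings_upto n.
Proof.
elim: n s => [|n IH] [|b s] //= size_s.
by rewrite inE mem_cat; case: b; rewrite (map_f _ (IH s size_s)) ?orbT.
Qed.

Lemma size_strings_upto n : size (strings_upto n) < 2 ^ n.+1.
Proof.
elim: n => [|n IH] //=; rewrite size_cat !size_map expnS.
by move: (2 ^ n.+1) (size (strings_upto n)) IH => X a; lia.
Qed.

(* A letter is the (output, label) pair of a node; a state is the pair of the
   letters of a node's predecessor and of the node itself. *)
Definition letter := (bitstring * bitstring)%type.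

Definition state := (letter * letter)%type.

Definition letters (l : nat) : seq letter :=
  [seq (o, s) | o <- strings_upto 2, s <- strings_upto l].

Definition states (l : nat) : seq state := [seq (x, y) | x <- letters l, y <- letters l].

Lemma size_states l : size (states l) < 2 ^ (2 * l + 8).
Proof.
have size_letters : size (letters l) < 2 ^ (l + 4).
  rewrite size_allpairs (_ : l + 4 = 3 + l.+1) 1?expnD; last by lia.
  exact: ltn_mul (size_strings_upto 2) (size_strings_upto l).
rewrite size_allpairs (_ : 2 * l + 8 = (l + 4) + (l + 4)) 1?expnD; last by lia.
exact: ltn_mul.
Qed.

(* Two states of consecutive nodes overlap in the letter of the first node, and
   that node's verifier accepts; so an accepting labelling of a cycle is
   exactly a closed walk of this relation. *)
Definition state_step (V : verifier) : rel state :=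
  fun s s' => (s.2 == s'.1) && V s.2.1 s.2.2 [:: s.1.2; s'.2.2].

Lemma cycle_nth (T : Type) (e : rel T) (x0 : T) (c : seq T) i :
  cycle e c -> i < size c -> e (nth x0 c i) (nth x0 c (i.+1 %% size c)).
Proof.
case: c => [|x p] // /(pathP x0) step lt_i; have := step i; rewrite size_rcons => /(_ lt_i).
rewrite -rcons_cons !nth_rcons lt_i /=.
case: (ltngtP i (size p)) => [lt_ip | gt_ip | ->].
- by rewrite modn_small.
- by move: lt_i; rewrite ltnS leqNgt gt_ip.
- by rewrite modnn.
Qed.

Lemma shorten_cycle (T : eqType) (e : rel T) (x : T) (p : seq T) :
  cycle e (x :: p) ->
  exists2 p', uniq (x :: p') & cycle e (x :: p') /\ {subset p' <= p}.
Proof.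
rewrite /= rcons_path => /andP[walk_p close_p].
move: close_p; case: (shortenP walk_p) => p' walk_p' uniq_p' sub_p' close_p'.
apply: (ex_intro2 _ _ p' uniq_p'); split=> //.
by rewrite /= rcons_path walk_p'.
Qed.

Section CycleStates.
Variable m : nat.
Local Notation N := m.+3.

Definition cyc_state (O L : assignment (cyc m)) (v : 'I_N) : state :=
  ((O (ord_pred v), L (ord_pred v)), (O v, L v)).

Lemma accepting_state_cycle V (O L : assignment (cyc m)) :
  accepts V (cyc m) (io_config (cyc m) (ec_input (cyc m)) O) L ->
  exists p, cycle (state_step V) (cyc_state O L ord0 :: p) /\
            {subset p <= codom (cyc_state O L)}.
Proof.
move=> accepted.
have step (u : 'I_N) : state_step V (cyc_state O L u) (cyc_state O L (ordS u)).
  by rewrite /state_step /= ordSK eqxx; exact: accepted u.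
have [q orbit0] : exists q, orbit (@ordS N) ord0 = ord0 :: q.
  by rewrite /orbit -orderSpred; eexists.
exists (map (cyc_state O L) q); split.
  rewrite -map_cons -orbit0 cycle_map.
  by apply: sub_cycle (cycle_orbit (@ordS_inj N) ord0) => u w /eqP <-; exact: step.
by move=> s /mapP [u _ ->]; exact: codom_f.
Qed.

Lemma short_state_cycle V (O L : assignment (cyc m)) l :
  accepts V (cyc m) (io_config (cyc m) (ec_input (cyc m)) O) L ->
  (forall v, size (O v) <= 2) -> (forall v, size (L v) <= l) ->
  exists p, cycle (state_step V) (cyc_state O L ord0 :: p) /\ (size p).+1 < 2 ^ (2 * l + 8).
Proof.
move=> accepted size_O size_L.
have [p [cycle_p sub_p]] := accepting_state_cycle accepted.
have [p' uniq_p' [cycle_p' sub_p']] := shorten_cycle cycle_p.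
exists p'; split=> //; apply: leq_ltn_trans (size_states l).
apply: (uniq_leq_size uniq_p') => s.
rewrite inE => /predU1P [-> | /sub_p' /sub_p /codomP [v ->]];
  by apply: allpairs_f; apply: allpairs_f; apply: mem_strings_upto.
Qed.

Definition pumped_output (x0 : state) (c : seq state) : assignment (cyc m) :=
  fun v => (nth x0 c (v %% size c)).2.1.

Definition pumped_labels (x0 : state) (c : seq state) : assignment (cyc m) :=
  fun v => (nth x0 c (v %% size c)).2.2.

Lemma pumped_accepts V x0 (c : seq state) :
  cycle (state_step V) c -> size c %| N ->
  accepts V (cyc m) (io_config (cyc m) (ec_input (cyc m)) (pumped_output x0 c))
    (pumped_labels x0 c).
Proof.
move=> cycle_c dvd_cN v.
have c_gt0 : 0 < size c by case: (size c) dvd_cN; rewrite // dvd0n.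
have mod_succ (u : 'I_N) : (u %% size c).+1 %% size c = ordS u %% size c.
  by rewrite /= -[(u %% _).+1]addn1 modnDml addn1 (modn_dvdm _ dvd_cN).
have := cycle_nth x0 cycle_c (ltn_pmod (ord_pred v) c_gt0).
rewrite mod_succ ord_predK => /andP [/eqP agree _].
have := cycle_nth x0 cycle_c (ltn_pmod v c_gt0); rewrite mod_succ => /andP [_].
by rewrite /accepts /pumped_output /pumped_labels /= agree.
Qed.

(* If the first state of c has a doubly covering output, the t nodes that are
   multiples of size c are doubled in the pumped output. *)
Lemma pumped_doubled x0 (c : seq state) t :
  N = t * size c -> (nth x0 c 0).2.1 = [:: true; true] ->
  t <= #|doubled (pumped_output x0 c)|.
Proof.
move=> size_N head_doubled.
have c_gt0 : 0 < size c by move: size_N; case: (size c) => //; rewrite muln0.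
have lt_N (i : 'I_t) : i * size c < N by rewrite size_N ltn_mul2r c_gt0 ltn_ord.
pose multiple (i : 'I_t) : 'I_N := Ordinal (lt_N i).
have multiple_inj : injective multiple.
  move=> i j /(congr1 (@nat_of_ord N)) /eqP.
  by rewrite /= eqn_mul2r eqn0Ngt c_gt0 => /eqP /ord_inj.
rewrite -[t in t <= _]card_ord -(card_imset _ multiple_inj); apply: subset_leq_card.
apply/subsetP => _ /imsetP [i _ ->].
by rewrite !inE /pumped_output /= modnMl head_doubled.
Qed.
End CycleStates.

Arguments pumped_output : clear implicits.
Arguments pumped_labels : clear implicits.

Lemma INR_expn2 n : INR (2 ^ n) = (2 ^ n)%R.
Proof. by elim: n => [|n IH] //; rewrite expnS -multE mult_INR IH /=; lra. Qed.

Lemma pow2_le_exp n : (2 ^ n <= exp (INR n))%R.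
Proof.
elim: n => [|n IH]; first by rewrite /= exp_0; lra.
rewrite S_INR exp_plus /=.
have e_gt2 : (2 < exp 1)%R by have := exp_ineq1 1 R1_neq_R0; lra.
have pow_pos : (0 < 2 ^ n)%R by apply: pow_lt; lra.
nra.
Qed.

Lemma log_label_bound l k : 256 <= k ->
  Rlt (INR l) (Rmult (/ 16) (ln (INR k))) -> 2 ^ (2 * l + 8) <= k.
Proof.
move=> k_large l_small.
have k_pos : (0 < INR k)%R by apply: lt_0_INR; apply/ltP; lia.
have exp_lt : (exp (INR (16 * l)) < INR k)%R.
  rewrite -(exp_ln (INR k) k_pos) -multE mult_INR; apply: exp_increasing; simpl; lra.
have : 2 ^ (16 * l) < k.
  by apply/ltP/INR_lt; rewrite INR_expn2; apply: Rle_lt_trans (pow2_le_exp _) exp_lt.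
case: l {l_small exp_lt} => [|l] // pow_lt_k.
by apply: leq_trans (ltnW pow_lt_k); rewrite leq_exp2l //; lia.
Qed.

Lemma max_label_below (G : pgraph) (L : assignment G) (x : R) :
  Rlt 0 x -> (forall v, Rlt (INR (size (L v))) x) ->
  exists l, Rlt (INR l) x /\ forall v, size (L v) <= l.
Proof.
move=> x_pos small_L; exists (\max_(v : node G) size (L v)); split.
  apply: (big_ind (fun n => Rlt (INR n) x)) => // a b a_small b_small.
  by rewrite /maxn; case: ltnP.
by move=> v; apply: (@leq_bigmax _ (fun v => size (L v))).
Qed.

Lemma ln_pos_large k : 256 <= k -> Rlt 0 (Rmult (/ 16) (ln (INR k))).
Proof.
move=> k_large; have k_gt1 : (1 < INR k)%R by rewrite -INR_1; apply: lt_INR; apply/ltP; lia.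
have : (0 < ln (INR k))%R by rewrite -ln_1; apply: ln_increasing; lra.
lra.
Qed.

Lemma labels_below_of_small_proofs k P (G : pgraph) (O : assignment G) (x : R) :
  ~ ec_proof_size_ge k P x -> ec_universe k G -> ec_optimal G O ->
  forall v, Rlt (INR (size (P G (io_config G (ec_input G) O) v))) x.
Proof.
move=> small univ opt v; apply: Rnot_le_lt => big_v; apply: small.
by exists G, O; split=> //; split=> //; exists v.
Qed.

(* Soundness rules out short accepted state cycles through a doubly covered
   node: pumping such a cycle 2(k+1) times around an even cycle produces an
   accepted cover which is not a (k+1)/k-approximation. *)
Lemma sound_scheme_long_cycle k V P (x : state) (p : seq state) :
  0 < k -> ec_APLS k V P -> cycle (state_step V) (x :: p) -> x.2.1 = [:: true; true] ->
  k <= (size p).+1.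
Proof.
move=> k_pos [_ sound] cycle_c head_doubled; pose t := (k + 1) * 2.
have t_gt0 : 0 < t by rewrite /t addn1.
have t_le : t <= t * size (x :: p) by rewrite leq_pmulr.
pose m := t * size (x :: p) - 3.
have size_N : m.+3 = t * size (x :: p).
  by rewrite /m; move: (t * size (x :: p)) t_le => X; rewrite /t; lia.
have odd_m : odd m.
  have : k + 1 <= (k + 1) * size (x :: p) by rewrite leq_pmulr.
  by rewrite /m /t mulnAC; move: ((k + 1) * size (x :: p)) => X; lia.
have doubled_t := pumped_doubled (x0 := x) size_N head_doubled.
apply: (approx_needs_long_period odd_m size_N t_gt0 doubled_t).
apply: NNPP => not_approx; apply: (sound _ _ _ not_approx _ (pumped_accepts x cycle_c _)).
- by apply: cycle_universe; rewrite size_N /t; lia.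
- by rewrite size_N dvdn_mull.
Qed.

Theorem theorem5p9 :
  exists c : R, Rlt 0 c /\
  exists k0 : nat, forall k : nat, (1 <= k)%N -> (k0 <= k)%N ->
    forall (V : verifier) (P : prover),
      ec_APLS k V P -> ec_proof_size_ge k P (Rmult c (ln (INR k))).
Proof.
exists (/ 16)%R; split; first lra.
exists 256 => k k_pos k_large V P scheme; apply: NNPP => small_proofs.
pose m := k.-1.*2; pose O := alt_cover m.
have univ : ec_universe k (cyc m) by apply: cycle_universe; rewrite /m; lia.
have opt : ec_optimal (cyc m) O by apply: alt_cover_optimal; rewrite odd_double.
have O_ord0 : O ord0 = [:: true; true] by rewrite /O /alt_cover /= odd_double.
pose L := P (cyc m) (io_config (cyc m) (ec_input (cyc m)) O).
have [l [l_small size_L]] := max_label_below (L := L) (ln_pos_large k_large)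
  (labels_below_of_small_proofs small_proofs univ opt).
have [p [cycle_c short_c]] :=
  short_state_cycle (scheme.1 _ _ univ opt) (fun v => leqnn 2 : size (O v) <= 2) size_L.
have long_c := sound_scheme_long_cycle k_pos scheme cycle_c O_ord0.
have := leq_trans short_c (log_label_bound k_large l_small).
by rewrite ltnNge long_c.
Qed.
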